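(* Let $Q$ be a quandle with a finite presentation $\langle S\mid R\rangle$, let $X$ be a quandle, $A$ an abelian group and $\theta:X^2\to A$ a quandle $2$-cocycle, and let $f_\theta=(f_\theta,0)$ be the Alexander pair associated with $\theta$ (pulled back to $Q$ via a quandle homomorphism $Q\to X$, which is suppressed from the notation). Then for any element $x^{y_{1}^{\varepsilon_1}\cdots y_{n}^{\varepsilon_n}}\in FQ(S)$ (with $x,y_1,\dots,y_n\in FQ(S)$, $\varepsilon_i\in\{\pm1\}$) and any $z\in S$, \[ \frac{\partial_{f_{\theta}}}{\partial{z}}\bigl(x^{y_{1}^{\varepsilon_1}\cdots y_{n}^{\varepsilon_n}}\bigr)=1\cdot\left(\sum^{n}_{i=1}\varepsilon_i\,\theta\bigl(x^{y_{1}^{\varepsilon_1}\cdots y_{i-1}^{\varepsilon_{i-1}}y_i^{\frac{\varepsilon_i-1}{2}}},\,y_i\bigr)\right)\frac{\partial_{f_{\theta}}}{\partial{z}}(x), \] where elements of $FQ(S)$ inside $\theta$ are understood via their images in $X$.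
   Context: A quandle is a set $X$ with a binary operation $(x,y)\mapsto x^y$ such that $x^x=x$; for all $x,y$ there is a unique $z$ with $z^y=x$ (denoted $x^{y^{-1}}$); and $(x^y)^z=(x^z)^{(y^z)}$. We write $x^{yz}$ for $(x^y)^z$, and $x^{y^0}=x$. $FQ(S)$ denotes the free quandle on $S$, and $\langle S\mid R\rangle$ (with $R\subset FQ(S)^2$) is the quotient of $FQ(S)$ by the smallest congruence containing $R$. A quandle $2$-cocycle is a map $\theta:X^2\to A$ with $\theta(x,x)=0_A$ and $\theta(x,y)+\theta(x^y,z)=\theta(x,z)+\theta(x^z,y^z)$ for all $x,y,z$. In the group ring $\mathbb{Z}[A]$, $1\cdot a$ denotes the basis element corresponding to $a\in A$ (so $1\cdot 0_A$ is the unity). The Alexander pair associated with $\theta$ is $(f_\theta,0)$ with $f_\theta(x,y)=1\cdot\theta(x,y)\in\mathbb{Z}[A]$ and $0(x,y)=0$. For an Alexander pair $f=(f_1,f_2)$ of maps $Q\times Q\to R$ and $x_j\in S$, the $f$-derivative $\frac{\partial_f}{\partial x_j}:FQ(S)\to R$ is the map determined by $\frac{\partial_f}{\partial x_j}(x^y)=f_1(x,y)\frac{\partial_f}{\partial x_j}(x)+f_2(x,y)\frac{\partial_f}{\partial x_j}(y)$ for all $x,y\in FQ(S)$ (arguments of $f_1,f_2$ taken via the projection $FQ(S)\to Q$), and $\frac{\partial_f}{\partial x_j}(x_i)=1$ if $i=j$, $0$ otherwise, for $x_i\in S$. *)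

From HB Require Import structures.
From Stdlib Require Import ClassicalEpsilon.
From mathcomp Require Import all_boot all_order all_algebra.
From mathcomp Require Import finmap.
From mathcomp.multinomials Require Import xfinmap monalg.

Set Implicit Arguments.
Unset Strict Implicit.
Unset Printing Implicit Defensive.

Import GRing.Theory.
Local Open Scope fset.
Local Open Scope ring_scope.

Section GroupRing.
Variable A : zmodType.

Definition grpring : Type := {malg int[A]}.
HB.instance Definition _ := GRing.Zmodule.on grpring.

Implicit Types g : grpring.

Local Notation "g1 *M_[ k1 , k2 ] g2" :=
  (<< g1@_k1 * g2@_k2 *g (k1 + k2) >> : grpring)
  (at level 40, no associativity).

Definition grone : grpring := << (0 : A) >>.

Definition grmul g1 g2 : grpring :=
  \sum_(k1 <- msupp g1) \sum_(k2 <- msupp g2) g1 *M_[k1, k2] g2.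

Lemma grmulr g1 g2 :
  grmul g1 g2 = \sum_(k2 <- msupp g2) \sum_(k1 <- msupp g1) g1 *M_[k1, k2] g2.
Proof. by rewrite /grmul exchange_big. Qed.

Lemma grmullw (d1 d2 : {fset A}) g1 g2 :
  msupp g1 `<=` d1 -> msupp g2 `<=` d2 ->
  grmul g1 g2 = \sum_(k1 <- d1) \sum_(k2 <- d2) g1 *M_[k1, k2] g2.
Proof.
move=> le_d1 le_d2; rewrite /grmul (big_fset_incl _ le_d1) /=.
  apply/eq_bigr=> k1 _; apply/big_fset_incl => // k _ /mcoeff_outdom ->.
  by rewrite mulr0 monalgU0.
move=> k _ /mcoeff_outdom g1k.
by rewrite big1 => // k' _; rewrite g1k mul0r monalgU0.
Qed.

Lemma grmulrw (d1 d2 : {fset A}) g1 g2 : msupp g1 `<=` d1 -> msupp g2 `<=` d2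
  -> grmul g1 g2 = \sum_(k2 <- d2) \sum_(k1 <- d1) g1 *M_[k1, k2] g2.
Proof. by move=> le_d1 le_d2; rewrite (grmullw le_d1 le_d2) exchange_big. Qed.

Lemma grmul0g : left_zero 0 grmul.
Proof. by move=> g; rewrite /grmul msupp0 big_seq_fset0. Qed.

Lemma grmulg0 : right_zero 0 grmul.
Proof. by move=> g; rewrite grmulr msupp0 big_seq_fset0. Qed.

Lemma grmulUg c k g :
  grmul << c *g k >> g = \sum_(k' <- msupp g) << c * g@_k' *g k + k' >>.
Proof.
rewrite (grmullw msuppU_le (fsubset_refl _)) big_seq_fset1.
by apply/eq_bigr => k' _; rewrite mcoeffUU.
Qed.

Lemma grmulgU c k g :
  grmul g << c *g k >> = \sum_(k' <- msupp g) << g@_k' * c *g k' + k >>.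
Proof.
rewrite (grmulrw (fsubset_refl _) msuppU_le) big_seq_fset1.
by apply/eq_bigr=> k' _; rewrite mcoeffUU.
Qed.

Lemma grmulUU c1 c2 k1 k2 :
  grmul << c1 *g k1 >> << c2 *g k2 >> = << c1 * c2 *g k1 + k2 >>.
Proof. by rewrite (grmulrw msuppU_le msuppU_le) !big_seq_fset1 !mcoeffUU. Qed.

Lemma grmulEl1 g1 g2 :
  grmul g1 g2 = \sum_(k1 <- msupp g1) grmul << g1@_k1 *g k1 >> g2.
Proof. by apply/eq_bigr=> k _; rewrite grmulUg. Qed.

Lemma grmulEr1 g1 g2 :
  grmul g1 g2 = \sum_(k2 <- msupp g2) grmul g1 << g2@_k2 *g k2 >>.
Proof. by rewrite grmulr; apply/eq_bigr=> k _; rewrite grmulgU. Qed.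

Lemma grmul1g : left_id grone grmul.
Proof.
move=> g; rewrite grmulUg [RHS]monalgE.
by apply/eq_bigr=> kg _; rewrite mul1r add0r.
Qed.

Lemma grmulg1 : right_id grone grmul.
Proof.
move=> g; rewrite grmulgU [RHS]monalgE.
by apply/eq_bigr=> k _; rewrite mulr1 addr0.
Qed.

Lemma grmulgDl : left_distributive grmul +%R.
Proof.
move=> g1 g2 g; rewrite [in RHS](@grmullw _ _ _ _ (fsubsetUl _ (msupp g2)) (fsubset_refl _)).
rewrite [in RHS](@grmullw _ _ _ _ (fsubsetUr (msupp g1) _) (fsubset_refl _)).
rewrite (@grmullw _ _ _ _ (msuppD_le _ _) (fsubset_refl _)).
rewrite -big_split /=; apply/eq_bigr=> k1 _.
rewrite -big_split /=; apply/eq_bigr=> k2 _.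
by rewrite mcoeffD mulrDl monalgUD.
Qed.

Lemma grmulgDr : right_distributive grmul +%R.
Proof.
move=> g g1 g2; rewrite [in RHS](@grmulrw _ _ _ _ (fsubset_refl _) (fsubsetUl _ (msupp g2))).
rewrite [in RHS](@grmulrw _ _ _ _ (fsubset_refl _) (fsubsetUr (msupp g1) _)).
rewrite (@grmulrw _ _ _ _ (fsubset_refl _) (msuppD_le _ _)).
rewrite -big_split /=; apply/eq_bigr => k1 _.
rewrite -big_split /=; apply/eq_bigr => k2 _.
by rewrite mcoeffD mulrDr monalgUD.
Qed.

Lemma grmulA : associative grmul.
Proof.
move=> g1 g2 g3.
rewrite [RHS](big_morph (grmul^~ _) (fun _ _ => grmulgDl _ _ _) (grmul0g _)).
rewrite grmulEl1; apply/eq_bigr=> k1 _.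
rewrite [LHS](big_morph (grmul _) (fun _ _ => grmulgDr _ _ _) (grmulg0 _)).
rewrite [RHS](big_morph (grmul^~ _) (fun _ _ => grmulgDl _ _ _) (grmul0g _)).
apply/eq_bigr=> k2 _.
rewrite [LHS](big_morph (grmul _) (fun _ _ => grmulgDr _ _ _) (grmulg0 _)).
by rewrite grmulEr1; apply/eq_bigr=> k3 _; rewrite !grmulUU mulrA addrA.
Qed.

Lemma grone_neq0 : grone != 0.
Proof. by apply/eqP/malgP=> /(_ 0) /eqP; rewrite !mcoeffsE oner_eq0. Qed.

HB.instance Definition _ := GRing.Zmodule_isNzRing.Build grpring
  grmulA grmul1g grmulg1 grmulgDl grmulgDr grone_neq0.

Lemma grmulC : commutative grmul.
Proof.
move=> g1 g2; rewrite /grmul exchange_big /=.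
by apply/eq_bigr=> k2 _; apply/eq_bigr=> k1 _; rewrite mulrC addrC.
Qed.

HB.instance Definition _ := GRing.PzRing_hasCommutativeMul.Build grpring grmulC.

Definition grbasis (a : A) : grpring := << (1 : int) *g a >>.

End GroupRing.

Notation "Z[ A ]" := (grpring A) (format "Z[ A ]") : type_scope.

Local Close Scope fset.

Record quandle := Quandle {
  qcar :> Type;
  qop : qcar -> qcar -> qcar;                    (* (x, y) |-> x^y *)
  qidem : forall x, qop x x = x;
  qrinv : forall x y, exists! z, qop z y = x;
  qdist : forall x y z, qop (qop x y) z = qop (qop x z) (qop y z)
}.

Arguments qop {q}.

Lemma qrinv_ex (Q : quandle) (x y : Q) : exists z, qop z y = x.
Proof. by have [z [hz _]] := qrinv x y; exists z. Qed.

(* x^{y^{-1}} : the unique z with z^y = x *)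
Definition qinv (Q : quandle) (x y : Q) : Q :=
  proj1_sig (constructive_indefinite_description _
    (qrinv_ex x y)).

Lemma qinvK (Q : quandle) (x y : Q) : qop (qinv x y) y = x.
Proof. by rewrite /qinv; case: constructive_indefinite_description. Qed.

Lemma qopK (Q : quandle) (x y : Q) : qinv (qop x y) y = x.
Proof.
have [z [_ uz]] := qrinv (qop x y) y.
have e1 := uz x erefl; have e2 := uz _ (qinvK (qop x y) y).
by rewrite -e2 e1.
Qed.

(* x^{y^e} for an integer e (so x^{y^0} = x) *)
Definition qpow (Q : quandle) (x y : Q) (e : int) : Q :=
  match e with
  | Posz n => iter n (fun t => qop t y) x
  | Negz n => iter n.+1 (fun t => qinv t y) x
  end.

(* x^{y_1^{e_1} ... y_k^{e_k}} for the word w = [:: (y_1,e_1); ...; (y_k,e_k)] *)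
Definition qact (Q : quandle) (x : Q) (w : seq (Q * int)) : Q :=
  foldl (fun t p => qpow t p.1 p.2) x w.

Definition quandle_hom (Q1 Q2 : quandle) (h : Q1 -> Q2) : Prop :=
  forall x y, h (qop x y) = qop (h x) (h y).

Definition is_free_quandle (S : Type) (F : quandle) (iota : S -> F) : Prop :=
  forall (Y : quandle) (g : S -> Y),
    exists h : F -> Y, [/\ quandle_hom h, (forall s, h (iota s) = g s) &
      forall h' : F -> Y, quandle_hom h' -> (forall s, h' (iota s) = g s) ->
        forall x, h' x = h x].

Definition quandle_congruence (Q : quandle) (C : Q -> Q -> Prop) : Prop :=
  [/\ (forall x, C x x), (forall x y, C x y -> C y x),
      (forall x y z, C x y -> C y z -> C x z),
      (forall x x' y y', C x x' -> C y y' -> C (qop x y) (qop x' y')) &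
      (forall x x' y y', C x x' -> C y y' -> C (qinv x y) (qinv x' y'))].

Definition gen_congruence (Q : quandle) (R : seq (Q * Q)) (x y : Q) : Prop :=
  forall C : Q -> Q -> Prop, quandle_congruence C ->
    (forall r, List.In r R -> C r.1 r.2) -> C x y.

(* Q = < S | R > : pi : FQ(S) -> Q is a surjective quandle homomorphism
   whose kernel is the congruence generated by R, i.e. Q is (isomorphic to)
   the quotient of FQ(S) by that congruence, pi being the projection. *)
Definition quandle_presentation (S : Type) (F : quandle) (iota : S -> F)
    (R : seq (F * F)) (Q : quandle) (pi : F -> Q) : Prop :=
  [/\ is_free_quandle iota, quandle_hom pi, (forall q, exists x, pi x = q) &
      forall x y, pi x = pi y <-> gen_congruence R x y].

Definition quandle_2cocycle (X : quandle) (A : zmodType) (theta : X -> X -> A)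
  : Prop :=
  [/\ (forall x, theta x x = 0) &
      (forall x y z, theta x y + theta (qop x y) z =
                     theta x z + theta (qop x z) (qop y z))].

Definition alex_pair_theta (Q X : quandle) (A : zmodType) (phi : Q -> X)
    (theta : X -> X -> A) : (Q -> Q -> Z[A]) * (Q -> Q -> Z[A]) :=
  (fun x y => grbasis (theta (phi x) (phi y)), fun _ _ => 0).

Definition is_fderivative (S : eqType) (F : quandle) (iota : S -> F)
    (Q : quandle) (pi : F -> Q) (Rg : pzRingType)
    (f : (Q -> Q -> Rg) * (Q -> Q -> Rg)) (z : S) (D : F -> Rg) : Prop :=
  [/\ (forall x y : F,
         D (qop x y) = f.1 (pi x) (pi y) * D x + f.2 (pi x) (pi y) * D y) &
      (forall s, D (iota s) = if s == z then 1 else 0)].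

From HB Require Import structures.
From mathcomp Require Import all_boot all_order all_algebra.
From mathcomp.multinomials Require Import monalg.

Set Implicit Arguments.
Unset Strict Implicit.
Unset Printing Implicit Defensive.
Import GRing.Theory.
Local Open Scope ring_scope.

(* Since the second component of the Alexander pair (f_theta, 0) vanishes, the
   derivative only picks up a factor 1.theta(t, y) at each step t |-> t^y;
   undoing a step t^{y^-1} |-> t contributes the inverse factor
   1.(-theta(t^{y^-1}, y)).  The basis elements 1.a multiply like a |-> a is
   additive, so along a word these factors add up inside a single 1.(...). *)

Section GroupRingBasis.
Variable A : zmodType.

Lemma grbasis0 : grbasis (0 : A) = 1.
Proof. by []. Qed.

Lemma grbasisD (a b : A) : grbasis a * grbasis b = grbasis (a + b).
Proof. exact: grmulUU. Qed.

Lemma grbasisNK (a : A) : grbasis (- a) * grbasis a = 1.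
Proof. by rewrite grbasisD addNr. Qed.

End GroupRingBasis.

Section DerivativeAlongWords.
Variables (A : zmodType) (F : quandle) (c : F -> F -> A) (D : F -> Z[A]).
Hypothesis D_qop : forall t y, D (qop t y) = grbasis (c t y) * D t.

Lemma D_qinv t y : D (qinv t y) = grbasis (- c (qinv t y) y) * D t.
Proof. by rewrite -[in D t](qinvK t y) D_qop mulrA grbasisNK mul1r. Qed.

Lemma D_qpow_unit t y (e : int) : (e == 1) || (e == -1) ->
  D (qpow t y e) = grbasis (c (qpow t y ((e - 1) %/ 2)%Z) y *~ e) * D t.
Proof. by case/orP => /eqP ->; rewrite /= ?D_qop // D_qinv mulrN1z. Qed.

Lemma D_qact x (w : seq (F * int)) :
  all (fun p => (p.2 == 1) || (p.2 == -1)) w ->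
  D (qact x w) =
    grbasis (\sum_(i < size w)
               c (qpow (qact x (take i w)) (nth (x, 0) w i).1
                       (((nth (x, 0) w i).2 - 1) %/ 2)%Z)
                 (nth (x, 0) w i).1 *~ (nth (x, 0) w i).2)
    * D x.
Proof.
elim: w x => [|p w IHw] x /=; first by rewrite big_ord0 grbasis0 mul1r.
case/andP => p_unit w_unit.
rewrite IHw // D_qpow_unit // mulrA grbasisD big_ord_recl addrC.
congr (grbasis (_ + _) * _); apply: eq_bigr => i _.
by rewrite /= !(set_nth_default (qpow x p.1 p.2, 0) (x, 0) (ltn_ord i)).
Qed.

End DerivativeAlongWords.

Theorem proposition3p3 (S : finType) (F : quandle) (iota : S -> F)
    (R : seq (F * F)) (Q : quandle) (pi : F -> Q)
    (X : quandle) (phi : Q -> X) (A : zmodType) (theta : X -> X -> A)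
    (z : S) (D : F -> Z[A]) :
  quandle_presentation iota R pi ->
  quandle_hom phi ->
  quandle_2cocycle theta ->
  is_fderivative iota pi (alex_pair_theta phi theta) z D ->
  forall (x : F) (w : seq (F * int)),
    all (fun p => (p.2 == 1) || (p.2 == -1)) w ->
    D (qact x w) =
      grbasis (\sum_(i < size w)
                 (theta (phi (pi (qpow (qact x (take i w)) (nth (x, 0) w i).1
                                       (((nth (x, 0) w i).2 - 1) %/ 2)%Z)))
                        (phi (pi (nth (x, 0) w i).1))
                  *~ (nth (x, 0) w i).2))
      * D x.
Proof.
move=> _ _ _ [D_qop _].
apply: (D_qact (c := fun t y => theta (phi (pi t)) (phi (pi y)))) => t y.
by rewrite D_qop /= mul0r addr0.
Qed.
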